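(* Let $G=(V,E)$ be a locally finite, connected, infinite graph. Then $p_{\mathrm{T,E}}\le p_{\mathrm{T,V}}$. If moreover $G$ has bounded degree, then $p_{\mathrm{T,E}}=p_{\mathrm{T,V}}$.
   Context: Fix a vertex $x$ (the thresholds do not depend on $x$). Consider Bernoulli$(p)$ bond percolation on $G$ (each edge open independently with probability $p$), with expectation $\mathbb{E}_p$; $C(x)$ is the open cluster of $x$, and $|C(x)|_V$, $|C(x)|_E$ denote its numbers of vertices and edges. Define $p_{\mathrm{T,V}}=\sup\{p\ge0:\mathbb{E}_p[|C(x)|_V]<\infty\}$ and $p_{\mathrm{T,E}}=\sup\{p\ge0:\mathbb{E}_p[|C(x)|_E]<\infty\}$. *)

From HB Require Import structures.
From mathcomp Require Import all_boot all_order all_algebra.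
From mathcomp Require Import all_classical all_reals all_analysis.
Set Implicit Arguments. Unset Strict Implicit. Unset Printing Implicit Defensive.
Import Order.TTheory GRing.Theory Num.Theory.
Local Open Scope classical_set_scope.
Local Open Scope ring_scope.

(* A simple graph given by a vertex type V, an edge type E and the two
   endpoints src e, tgt e of each edge (edges are undirected: the labelling
   of the endpoints carries no meaning). *)
Record graph := Graph {
  vert : choiceType;
  edge : choiceType;
  src : edge -> vert;
  tgt : edge -> vert }.

Section Graphs.
Variable G : graph.
Local Notation V := (vert G).
Local Notation E := (edge G).

Definition incident (e : E) (v : V) : Prop := src e = v \/ tgt e = v.

Definition joins (e : E) (u v : V) : Prop :=
  (src e = u /\ tgt e = v) \/ (src e = v /\ tgt e = u).

Definition simple_graph : Prop :=
  (forall e : E, src e <> tgt e) /\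
  (forall e e' : E, joins e (src e') (tgt e') -> e = e').

Definition locally_finite : Prop :=
  forall v : V, finite_set [set e : E | incident e v].

Definition bounded_degree : Prop :=
  exists D : nat, forall v : V, exists s : seq E,
    (size s <= D)%N /\ forall e, incident e v -> e \in s.

Fixpoint path_in (ok : E -> Prop) (u v : V) (p : seq (E * V)) : Prop :=
  match p with
  | [::] => u = v
  | (e, w) :: p' => ok e /\ joins e u w /\ path_in ok w v p'
  end.

Definition connected_by (ok : E -> Prop) (u v : V) : Prop :=
  exists p, path_in ok u v p.

Definition connected_graph : Prop :=
  forall u v : V, connected_by (fun _ => True) u v.

Definition infinite_graph : Prop := infinite_set [set: V].

(* Percolation configuration: omega e = true iff the edge e is open. *)
Definition clusterV (omega : E -> bool) (x : V) : set V :=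
  [set y | connected_by (fun e => omega e) x y].

(* Edge set of the open cluster C(x): open edges with an endpoint
   (hence both endpoints) in C(x). *)
Definition clusterE (omega : E -> bool) (x : V) : set E :=
  [set e | omega e /\ (clusterV omega x (src e) \/ clusterV omega x (tgt e))].

Section Percolation.
Variable R : realType.

(* cardinality of a set, as an extended real (+oo if infinite) *)
Definition ecard (T : choiceType) (A : set T) : \bar R :=
  (\esum_(a in A) (1 : \bar R))%E.

(* Bernoulli(p):
   for every finite family of distinct edges the probability of any
   prescribed pattern of states is the product of p's and (1-p)'s. *)
Definition bernoulli_bond (d : measure_display) (Omega : measurableType d)
  (P : probability Omega R) (omega : Omega -> E -> bool) (p : R) : Prop :=
  (forall e : E, measurable [set w | omega w e]) /\
  (forall (s : seq E) (b : E -> bool), uniq s ->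
     P [set w | forall e, e \in s -> omega w e = b e] =
     (\prod_(e <- s) (if b e then p else 1 - p))%:E).

(* E_p[|C(x)|_V] < oo, for (every realisation of) Bernoulli(p) percolation *)
Definition finite_meanV (x : V) (p : R) : Prop :=
  forall (d : measure_display) (Omega : measurableType d)
    (P : probability Omega R) (omega : Omega -> E -> bool),
    bernoulli_bond P omega p ->
    (\int[P]_w ecard (clusterV (omega w) x) < +oo)%E.

Definition finite_meanE (x : V) (p : R) : Prop :=
  forall (d : measure_display) (Omega : measurableType d)
    (P : probability Omega R) (omega : Omega -> E -> bool),
    bernoulli_bond P omega p ->
    (\int[P]_w ecard (clusterE (omega w) x) < +oo)%E.

Definition pTV (x : V) : R :=
  sup [set p : R | 0 <= p <= 1 /\ finite_meanV x p].

Definition pTE (x : V) : R :=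
  sup [set p : R | 0 <= p <= 1 /\ finite_meanE x p].

End Percolation.
End Graphs.

From Pilot Require Import Defs.
From HB Require Import structures.
From mathcomp Require Import all_boot all_order all_algebra.
From mathcomp Require Import all_classical all_reals all_analysis.
Set Implicit Arguments. Unset Strict Implicit. Unset Printing Implicit Defensive.
Import Order.TTheory GRing.Theory Num.Theory.
Local Open Scope classical_set_scope.
Local Open Scope ring_scope.
Import HBNNSimple.

(* Every vertex of C(x) other than x is an endpoint of an edge of C(x), so
   |C(x)|_V <= 1 + 2 |C(x)|_E; every edge of C(x) is incident to a vertex of
   C(x), so |C(x)|_E <= D |C(x)|_V when all degrees are at most D.  Taking
   expectations, E_p|C(x)|_E < oo implies E_p|C(x)|_V < oo for every p, and
   conversely for bounded degree; hence the sets of parameters whose suprema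
   define p_{T,E} and p_{T,V} are nested. *)

(* The integrands below are not known to be measurable, so [\int] is the
   supremum of the integrals of simple functions under the integrand, which is
   not subadditive: a pointwise bound f <= a + c g cannot be integrated as is,
   but the dichotomy f <= a or f <= c g splits each such simple function. *)
Section IntegralSplit.
Context d (T : measurableType d) (R : realType) (P : probability T R).
Variables (f g : T -> \bar R) (a c : R).
Hypotheses (a_ge0 : 0 <= a) (c_gt0 : 0 < c) (g_ge0 : forall w, (0 <= g w)%E).
Hypothesis f_le : forall w, (f w <= a%:E)%E \/ (f w <= c%:E * g w)%E.

Lemma sintegral_le_cst_or_scale (h : {nnsfun T >-> R}) :
  (forall w, (h w)%:E <= f w)%E ->
  (sintegral P h <= a%:E + c%:E * \int[P]_w g w)%E.
Proof.
move=> hf; pose B := [set w | a < h w].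
have mB : measurable B.
  rewrite (_ : B = h @^-1` `]a, +oo[%classic); first exact: measurable_funPTI.
  by apply/seteqP; split => w /=; rewrite in_itv /= andbT.
have inB w : (w \in B) = (a < h w) by apply/idP/idP => [/set_mem|/mem_set].
have -> : sintegral P h =
    sintegral P (proj_nnsfun h (measurableC mB) \+ proj_nnsfun h mB).
  apply: eq_sintegral => w /=; rewrite !measurable_realfun.mindicE in_setC inB.
  by case: (a < h w); rewrite /= ?mulr1 ?mulr0 ?addr0 ?add0r.
rewrite sintegralD; apply: leeD.
  pose a_cst := scale_nnsfun (indic_nnsfun R (@measurableT _ T)) a_ge0.
  apply: (@le_trans _ _ (sintegral P a_cst)).
    apply: le_sintegral => w /=.
    rewrite !measurable_realfun.mindicE in_setC inB in_setT /=.
    by case: (ltP a (h w)) => /=; rewrite ?mulr0 ?mulr1.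
  by rewrite sintegralrM sintegral_indic /= probability_setT mule1.
(* On [B], h <= f <= c g, so h / c restricted to [B] is a simple function
   under g. *)
have cV_ge0 : 0 <= c^-1 by rewrite invr_ge0 ltW.
pose k := scale_nnsfun (proj_nnsfun h mB) cV_ge0.
have -> : sintegral P (proj_nnsfun h mB) = (c%:E * sintegral P k)%E.
  by rewrite sintegralrM muleA -EFinM divff ?gt_eqF // mul1e.
rewrite lee_pmul2l ?lte_fin //.
rewrite (ge0_integralTE P g_ge0); apply: ereal_sup_ubound; exists k => // w.
rewrite /= measurable_realfun.mindicE inB.
case: ltP => /= [ahw|]; last by rewrite !mulr0 g_ge0.
rewrite mulr1; have [fa|fcg] := f_le w.
  by have := le_trans (hf w) fa; rewrite lee_fin leNgt ahw.
by rewrite EFinM lee_pdivrMl //; exact: le_trans (hf w) fcg.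
Qed.

Lemma integral_le_cst_or_scale : (forall w, 0 <= f w)%E ->
  (\int[P]_w f w <= a%:E + c%:E * \int[P]_w g w)%E.
Proof.
move=> f_ge0; rewrite (ge0_integralTE P f_ge0).
by apply: ge_ereal_sup => _ [h hf <-]; exact: sintegral_le_cst_or_scale.
Qed.

End IntegralSplit.

Section ExtendedCardinality.
Context {R : realType}.
Local Open Scope ereal_scope.
Local Notation ecard := (@ecard R).

Lemma ecard_ge0 (T : choiceType) (A : set T) : 0 <= ecard A.
Proof. exact: esum_ge0. Qed.

Lemma ecard_set0 (T : choiceType) : ecard (@set0 T) = 0.
Proof. exact: esum_set0. Qed.

Lemma ecard_set1 (T : choiceType) (t : T) : ecard [set t] = 1.
Proof. exact: esum_set1. Qed.

Lemma le_ecard (T : choiceType) (A B : set T) : A `<=` B -> ecard A <= ecard B.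
Proof.
move=> AB; rewrite /ecard (esum_mkcond A) (esum_mkcond B).
apply: le_esum => t _; case: ifPn => [/set_mem/AB/mem_set -> //|_].
by case: ifP.
Qed.

Lemma ecard_ge1 (T : choiceType) (A : set T) (t : T) : A t -> 1 <= ecard A.
Proof. by move=> At; rewrite -(ecard_set1 t); apply: le_ecard => _ ->. Qed.

Lemma ecard_setU_le (T : choiceType) (A B : set T) :
  ecard (A `|` B) <= ecard A + ecard B.
Proof.
rewrite /ecard (esumID A) // setUK; apply: leeD2l.
by apply: le_ecard => t [[]].
Qed.

Lemma ecard_seq_le (T : choiceType) (s : seq T) :
  ecard [set` s] <= (size s)%:R%:E.
Proof.
elim: s => [|t s IHs].
  by rewrite (_ : [set` [::]] = set0) ?ecard_set0 //; apply/seteqP; split.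
have -> : [set` t :: s] = [set t] `|` [set` s].
  apply/seteqP; split => u /=; rewrite inE.
    by case/orP => [/eqP|]; [left|right].
  by case=> [->|->]; rewrite ?eqxx ?orbT.
apply: le_trans (ecard_setU_le _ _) _.
by rewrite ecard_set1 -natr1 EFinD addeC leeD2l.
Qed.

Lemma esum_cst_nat (T : choiceType) (A : set T) (n : nat) :
  \esum_(t in A) n%:R%:E = ecard A *+ n.
Proof.
elim: n => [|n IHn]; first by rewrite esum1.
by rewrite -natr1 EFinD esumD // IHn muleS addeC.
Qed.

Lemma ecard_inj_image (T T' : choiceType) (A : set T) (f : T -> T') :
  set_inj A f -> ecard (f @` A) = ecard A.
Proof. exact: esum_image. Qed.

Lemma ecard_bigcup_le (I T : choiceType) (A : set I) (B : I -> set T) :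
  ecard (\bigcup_(i in A) B i) <= \esum_(i in A) ecard (B i).
Proof.
have [[i0 Ai0]|/nonemptyPn->] := pselect (A !=set0); last first.
  by rewrite bigcup_set0 ecard_set0 esum_ge0 // => i _; exact: ecard_ge0.
have /choice [idx idxP] : forall t, exists i,
    (\bigcup_(i in A) B i) t -> A i /\ B i t.
  move=> t; have [[i Ai Bit]|nt] := pselect ((\bigcup_(i in A) B i) t).
    by exists i.
  by exists i0 => /nt.
have idx_inj : set_inj (\bigcup_(i in A) B i) (fun t => (idx t, t)).
  by move=> t u _ _ [_].
rewrite -(ecard_inj_image idx_inj) /ecard esum_esum //.
by apply: le_ecard => _ [t /idxP tAB <-].
Qed.

Lemma ecard_bigcup_le_cst (I T : choiceType) (A : set I) (B : I -> set T) n :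
  (forall i, A i -> ecard (B i) <= n%:R%:E) ->
  ecard (\bigcup_(i in A) B i) <= ecard A *+ n.
Proof.
move=> leBn; rewrite -esum_cst_nat.
exact: le_trans (ecard_bigcup_le A B) (le_esum leBn).
Qed.

End ExtendedCardinality.

Section Clusters.
Variable G : graph.
Local Notation V := (vert G).
Local Notation E := (edge G).

Lemma path_in_last (ok : E -> Prop) (u v : V) p :
  path_in ok u v p -> u = v \/ exists2 e, ok e & incident e v.
Proof.
elim: p u => [|[e w] p IHp] u //=; first by left.
move=> [ok_e [join_e /IHp [<-|]]]; last by right.
right; exists e => //.
by case: join_e => [[_ <-]|[<- _]]; [right|left].
Qed.

Lemma clusterV_sub (omega : E -> bool) (x : V) :
  clusterV omega x `<=`
  [set x] `|` \bigcup_(e in Defs.clusterE omega x) [set` [:: src e; tgt e]].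
Proof.
move=> y [p xy]; have [->|[e ok_e inc_e]] := path_in_last xy; first by left.
right; exists e; last by case: inc_e => <-; rewrite /= !inE eqxx ?orbT.
by split=> //; case: inc_e => ey; [left|right]; rewrite ey; exists p.
Qed.

Lemma clusterE_sub (omega : E -> bool) (x : V) :
  Defs.clusterE omega x `<=`
  \bigcup_(y in clusterV omega x) [set e | incident e y].
Proof.
move=> e [_ [Cs|Ct]]; first by exists (src e) => //; left.
by exists (tgt e) => //; right.
Qed.

Variable R : realType.
Local Open Scope ereal_scope.
Local Notation ecard := (@ecard R).

Lemma ecard_clusterV_le (omega : E -> bool) (x : V) :
  ecard (clusterV omega x) <= 1 + ecard (Defs.clusterE omega x) *+ 2.
Proof.
apply: le_trans; first exact: le_ecard (@clusterV_sub omega x).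
apply: le_trans (ecard_setU_le _ _) _; rewrite ecard_set1 leeD2l //.
by apply: ecard_bigcup_le_cst => e _; exact: ecard_seq_le.
Qed.

Lemma ecard_clusterE_le (omega : E -> bool) (x : V) (D : nat) :
  (forall v : V, ecard [set e | incident e v] <= D%:R%:E) ->
  ecard (Defs.clusterE omega x) <= ecard (clusterV omega x) *+ D.
Proof.
move=> degD; apply: le_trans; first exact: le_ecard (@clusterE_sub omega x).
exact: ecard_bigcup_le_cst.
Qed.

Lemma ecard_clusterV_le1_or (omega : E -> bool) (x : V) :
  ecard (clusterV omega x) <= 1 \/
  ecard (clusterV omega x) <= 3%:E * ecard (Defs.clusterE omega x).
Proof.
have leCV := ecard_clusterV_le omega x.
have [[e Ce]|/nonemptyPn CE0] := pselect (Defs.clusterE omega x !=set0).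
  right; apply: le_trans leCV _.
  by rewrite mule_natl muleS leeD2r // (ecard_ge1 Ce).
by move: leCV; rewrite CE0 ecard_set0 -mule_natl mule0 adde0; left.
Qed.

Lemma bounded_degree_ecard : bounded_degree G ->
  exists D : nat, forall v : V, ecard [set e | incident e v] <= D%:R%:E.
Proof.
move=> [D degD]; exists D => v; have [s [sD inc_s]] := degD v.
apply: le_trans (le_ecard (B := [set` s]) inc_s) _.
by apply: le_trans (ecard_seq_le s) _; rewrite lee_fin ler_nat.
Qed.

End Clusters.

Lemma le_sup_ge0 (R : realType) (A B : set R) :
  A `<=` B -> has_ubound B -> (forall b, B b -> 0 <= b) -> sup A <= sup B.
Proof.
move=> AB ubB B_ge0.
have [[a Aa]|/nonemptyPn->] := pselect (A !=set0); last first.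
  rewrite sup0; have [[b Bb]|/nonemptyPn->] := pselect (B !=set0).
    exact: le_trans (B_ge0 _ Bb) (ub_le_sup ubB Bb).
  by rewrite sup0.
apply: sup_le.
- by move=> t /AB Bt; exists t.
- by exists a.
- by split => //; exists a; exact: AB.
Qed.

Section Percolation.
Variables (G : graph) (R : realType) (x : vert G).

Lemma finite_meanE_meanV (p : R) : finite_meanE x p -> finite_meanV x p.
Proof.
move=> finE d Omega P omega bb.
apply: le_lt_trans (integral_le_cst_or_scale P ler01 (ltr0n _ 3)
  (fun=> ecard_ge0 _) (fun w => ecard_clusterV_le1_or R (omega w) x)
  (fun=> ecard_ge0 _)) _.
by rewrite lte_add_pinfty ?ltry // lte_mul_pinfty // (finE _ _ _ _ bb).
Qed.

Lemma finite_meanV_meanE (p : R) :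
  bounded_degree G -> finite_meanV x p -> finite_meanE x p.
Proof.
move=> /(bounded_degree_ecard R) [D degD] finV d Omega P omega bb.
have CE_le w : (ecard R (Defs.clusterE (omega w) x) <= 0%:E \/
    ecard R (Defs.clusterE (omega w) x) <=
    D.+1%:R%:E * ecard R (clusterV (omega w) x))%E.
  right; rewrite mule_natl; apply: le_trans (ecard_clusterE_le _ _ degD) _.
  by rewrite muleS leeDr ?ecard_ge0.
apply: le_lt_trans (integral_le_cst_or_scale P (lexx 0) (ltr0Sn _ D)
  (fun=> ecard_ge0 _) CE_le (fun=> ecard_ge0 _)) _.
by rewrite lte_add_pinfty ?ltry // lte_mul_pinfty // (finV _ _ _ _ bb).
Qed.

End Percolation.

Theorem lemma2p2 (R : realType) (G : graph) (x : vert G) :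
  simple_graph G -> locally_finite G -> connected_graph G -> infinite_graph G ->
  (pTE R x <= pTV R x) /\ (bounded_degree G -> pTE R x = pTV R x).
Proof.
move=> _ _ _ _.
have le_threshold (Q1 Q2 : R -> Prop) : (forall p, Q1 p -> Q2 p) ->
    sup [set p | 0 <= p <= 1 /\ Q1 p] <= sup [set p | 0 <= p <= 1 /\ Q2 p].
  move=> Q12; apply: le_sup_ge0 => [p [p01 /Q12]||p [/andP[]]] //.
  by exists 1 => p [/andP[]].
have pTE_le : pTE R x <= pTV R x.
  exact: le_threshold _ _ (@finite_meanE_meanV G R x).
split=> // bdG; apply/eqP; rewrite eq_le pTE_le.
exact: le_threshold _ _ (fun p => @finite_meanV_meanE G R x p bdG).
Qed.
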